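(* Let $f:(K,\alpha_K)\to(L,\alpha_L)$ be a central extension of a perfect Hom-Leibniz $n$-algebra $(L,\alpha_L)$ with $\alpha_L$ injective, and suppose $(K,\alpha_K)$ satisfies condition (C): $[\alpha_K(k),\alpha_K(k),\alpha_K(k_3),\dots,\alpha_K(k_n)]=0$ for all $k,k_3,\dots,k_n\in K$. Then $f(Z(\alpha_K(K)))=Z(\alpha_L(L))$.
   Context: Fix a field $\mathbb K$ and $n\ge2$. A (multiplicative) Hom-Leibniz $n$-algebra is a $\mathbb K$-vector space $L$ with an $n$-linear bracket and a linear map $\alpha_L$ preserving the bracket, satisfying $[[x_1,\dots,x_n],\alpha_L(y_1),\dots,\alpha_L(y_{n-1})]=\sum_{i=1}^n[\alpha_L(x_1),\dots,[x_i,y_1,\dots,y_{n-1}],\dots,\alpha_L(x_n)]$. Homomorphisms preserve brackets and commute with twisting maps. Perfect: $L=[L,\dots,L]$. For a subspace $S$ closed under the bracket, $Z(S)$ is the set of $x\in S$ such that every bracket with $x$ in some position and all other entries in $S$ is $0$; $Z(\alpha_K(K))$ and $Z(\alpha_L(L))$ are computed inside the subalgebras $\alpha_K(K)$, $\alpha_L(L)$. A central extension of $L$ is a surjective homomorphism $f:K\to L$ with $\ker f\subseteq Z(K)$. *)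

From HB Require Import structures.
From mathcomp Require Import all_boot all_order all_algebra.
Set Implicit Arguments. Unset Strict Implicit. Unset Printing Implicit Defensive.
Import GRing.Theory.
Local Open Scope ring_scope.

Section HomLeibniz.
Variables (F : fieldType) (n : nat).

Definition upd (V : Type) (x : {ffun 'I_n -> V}) (i : 'I_n) (v : V)
  : {ffun 'I_n -> V} := [ffun j => if j == i then v else x j].

(* the n-tuple (v, y_1, ..., y_{n-1}) built from v and an (n-1)-tuple y *)
Definition consf (V : Type) (v : V) (y : {ffun 'I_n.-1 -> V})
  : {ffun 'I_n -> V} :=
  [ffun j : 'I_n => if val j == 0%N then v
                    else odflt v (omap y (insub (val j).-1))].

Definition is_linear_map (V W : lmodType F) (g : V -> W) : Prop :=
  forall (a : F) (u v : V), g (a *: u + v) = a *: g u + g v.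

Definition multilinear (V : lmodType F) (br : {ffun 'I_n -> V} -> V) : Prop :=
  forall (x : {ffun 'I_n -> V}) (i : 'I_n), is_linear_map (fun v => br (upd x i v)).

Definition HomLeibniz (V : lmodType F) (br : {ffun 'I_n -> V} -> V)
    (al : V -> V) : Prop :=
  [/\ multilinear br,
      is_linear_map al,
      (forall x : {ffun 'I_n -> V}, al (br x) = br [ffun j => al (x j)]) &
      (forall (x : {ffun 'I_n -> V}) (y : {ffun 'I_n.-1 -> V}),
         br (consf (br x) [ffun j => al (y j)])
         = \sum_(i < n) br [ffun j => if j == i then br (consf (x i) y)
                                       else al (x j)])].

Definition HomLeibniz_hom (V W : lmodType F)
    (brV : {ffun 'I_n -> V} -> V) (alV : V -> V)
    (brW : {ffun 'I_n -> W} -> W) (alW : W -> W) (f : V -> W) : Prop :=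
  [/\ is_linear_map f,
      (forall x : {ffun 'I_n -> V}, f (brV x) = brW [ffun j => f (x j)]) &
      (forall v, f (alV v) = alW (f v))].

Definition perfect (V : lmodType F) (br : {ffun 'I_n -> V} -> V) : Prop :=
  forall v : V, exists s : seq (F * {ffun 'I_n -> V}),
    v = \sum_(p <- s) p.1 *: br p.2.

(* Z(S) for a subspace S closed under the bracket, computed inside S *)
Definition centre_in (V : lmodType F) (br : {ffun 'I_n -> V} -> V)
    (S : V -> Prop) (x : V) : Prop :=
  S x /\ forall (i : 'I_n) (z : {ffun 'I_n -> V}),
           (forall j, S (z j)) -> br (upd z i x) = 0.

Definition image_of (V : Type) (al : V -> V) : V -> Prop :=
  fun v => exists k, v = al k.

Definition central_extension (V W : lmodType F)
    (brV : {ffun 'I_n -> V} -> V) (alV : V -> V)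
    (brW : {ffun 'I_n -> W} -> W) (alW : W -> W) (f : V -> W) : Prop :=
  [/\ HomLeibniz_hom brV alV brW alW f,
      (forall w : W, exists v, f v = w) &
      (forall v : V, f v = 0 -> centre_in brV (fun _ => True) v)].

Definition condC (V : lmodType F) (br : {ffun 'I_n -> V} -> V) (al : V -> V)
  : Prop :=
  forall (k : V) (z : {ffun 'I_n -> V}),
    br [ffun j : 'I_n => if (val j < 2)%N then al k else al (z j)] = 0.

End HomLeibniz.

(* Push forward along the surjection f gives one inclusion.  For the other,
   lift a central y = alL l to x = alK k with f k = l.  A bracket of
   alK-images with x in a slot i >= 1, viewed as a linear function Phi of the
   first entry u, kills the kernel of f (which is central) and kills every
   bracket: by the Leibniz identity Phi (brK q) is a sum of brackets each
   containing an inner bracket whose f-image, after applying the injective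
   alL, contains alL l in a slot and hence vanishes; so that inner bracket is
   central.  Since L is perfect, K is spanned by brackets and ker f, so
   Phi = 0.  Slot 0 is reduced to slot 1 by the skew-symmetry of the first two
   slots that condition (C) gives on alK-images. *)

From HB Require Import structures.
From mathcomp Require Import all_boot all_order all_algebra.
Import GRing.Theory.
Local Open Scope ring_scope.
Set Implicit Arguments. Unset Strict Implicit.

Section LinearMap.
Variables (F : fieldType) (V W : lmodType F) (g : V -> W).
Hypothesis g_lin : is_linear_map g.

Lemma lin0 : g 0 = 0.
Proof.
have h := g_lin 1 0 0; rewrite !scale1r addr0 in h.
by apply: (@addrI _ (g 0)); rewrite addr0 -h.
Qed.

Lemma linD u v : g (u + v) = g u + g v.
Proof. by rewrite -{1}(scale1r u) g_lin scale1r. Qed.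

Lemma linZ a u : g (a *: u) = a *: g u.
Proof. by rewrite -(addr0 (a *: u)) g_lin lin0 addr0. Qed.

Lemma linB u v : g (u - v) = g u - g v.
Proof. by rewrite linD -scaleN1r linZ scaleN1r. Qed.

End LinearMap.

Section Tuples.
Variable n' : nat.
Local Notation N := n'.+2.

Lemma consf0 (V : Type) (u : V) (Y : {ffun 'I_N.-1 -> V}) :
  consf u Y ord0 = u.
Proof. by rewrite ffunE. Qed.

Lemma consf_lift (V : Type) (u : V) (Y : {ffun 'I_N.-1 -> V}) j :
  consf u Y (lift ord0 j) = Y j.
Proof. by rewrite ffunE /= add0n valK. Qed.

Lemma ffun_consf (V : Type) (t : {ffun 'I_N -> V}) :
  t = consf (t ord0) [ffun j => t (lift ord0 j)].
Proof.
apply/ffunP => j; case: (unliftP ord0 j) => [j'|] ->.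
  by rewrite consf_lift ffunE.
by rewrite consf0.
Qed.

Lemma consf_map (V W : Type) (g : V -> W) (u : V) (Y : {ffun 'I_N.-1 -> V}) :
  [ffun j => g (consf u Y j)] = consf (g u) [ffun j => g (Y j)].
Proof.
apply/ffunP => j; rewrite ffunE; case: (unliftP ord0 j) => [j'|] ->.
  by rewrite !consf_lift ffunE.
by rewrite !consf0.
Qed.

Lemma consf_updE (V : Type) (u u0 : V) (Y : {ffun 'I_N.-1 -> V}) :
  consf u Y = upd (consf u0 Y) ord0 u.
Proof.
apply/ffunP => j; rewrite [RHS]ffunE; case: (unliftP ord0 j) => [j'|] ->.
  by rewrite !consf_lift.
by rewrite !consf0 eqxx.
Qed.

Lemma upd_id (V : Type) (x : {ffun 'I_N -> V}) i : upd x i (x i) = x.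
Proof. by apply/ffunP => j; rewrite ffunE; case: eqP => // ->. Qed.

Definition ord_one : 'I_N := lift ord0 ord0.

Definition swap01 (j : 'I_N) : 'I_N :=
  if j == ord0 then ord_one else if j == ord_one then ord0 else j.

End Tuples.

Arguments ord_one {n'}.

Section SkewSymmetry.
Variables (F : fieldType) (n' : nat) (V : lmodType F).
Variables (br : {ffun 'I_n'.+2 -> V} -> V) (al : V -> V).
Hypotheses (br_ml : multilinear br) (al_lin : is_linear_map al)
  (br_C : condC br al).

Lemma bracket_swap01 (z : {ffun 'I_n'.+2 -> V}) :
  br [ffun j => al (z j)] = - br [ffun j => al (z (swap01 j))].
Proof.
pose B u v := br [ffun j => if j == ord0 then u else if j == ord_one then v
                            else al (z j)].
have one_neq0 : (@ord_one n' == ord0) = false by [].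
have BDl u u' v : B (u + u') v = B u v + B u' v.
  have e w : B w v = br (upd [ffun j => if j == ord_one then v else al (z j)] ord0 w).
    by congr (br _); apply/ffunP => j; rewrite !ffunE.
  by rewrite !e -{1}(scale1r u) br_ml scale1r.
have BDr u v v' : B u (v + v') = B u v + B u v'.
  have e w : B u w = br (upd [ffun j => if j == ord0 then u else al (z j)] ord_one w).
    congr (br _); apply/ffunP => j; rewrite !ffunE.
    by case: (eqVneq j ord0) => [->|]; rewrite ?one_neq0 //; case: eqP.
  by rewrite !e -{1}(scale1r v) br_ml scale1r.
have Bdiag w : B (al w) (al w) = 0.
  rewrite -(br_C w z); congr (br _); apply/ffunP => j; rewrite !ffunE.
  by case: j => [[|[|m]] hm].
have Bskew u v : B (al u) (al v) = - B (al v) (al u).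
  have := Bdiag (u + v).
  rewrite (linD al_lin) BDl !BDr !Bdiag add0r addr0 => h.
  by apply/eqP; rewrite -addr_eq0 h.
have -> : br [ffun j => al (z j)] = B (al (z ord0)) (al (z ord_one)).
  congr (br _); apply/ffunP => j; rewrite !ffunE.
  by case: (eqVneq j ord0) => [->|] //; case: (eqVneq j ord_one) => [->|].
rewrite Bskew; congr (- br _); apply/ffunP => j; rewrite !ffunE /swap01.
by rewrite !(fun_if (fun x => al (z x))).
Qed.

End SkewSymmetry.

Section CentralExtension.
Variables (F : fieldType) (n' : nat) (K L : lmodType F).
Variables (brK : {ffun 'I_n'.+2 -> K} -> K) (alK : K -> K).
Variables (brL : {ffun 'I_n'.+2 -> L} -> L) (alL : L -> L) (f : K -> L).

Lemma hom_centre_image (x : K) :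
  HomLeibniz_hom brK alK brL alL f -> (forall l, exists k, f k = l) ->
  centre_in brK (image_of alK) x -> centre_in brL (image_of alL) (f x).
Proof.
move=> [f_lin f_br f_al] f_surj [[k0 ->] x_centre]; split.
  by exists (f k0); rewrite f_al.
move=> i z z_im.
have z_lift j : exists k, f (alK k) = z j.
  by have [l ->] := z_im j; have [k <-] := f_surj l; exists k; rewrite f_al.
have [kz kzE] := fin_all_exists z_lift.
have -> : upd z i (f (alK k0)) = [ffun j => f (upd [ffun j => alK (kz j)] i (alK k0) j)].
  by apply/ffunP => j; rewrite !ffunE; case: eqP; rewrite ?ffunE ?kzE.
rewrite -f_br x_centre ?(lin0 f_lin) // => j.
by exists (kz j); rewrite ffunE.
Qed.

Hypotheses (HK : HomLeibniz brK alK) (HL : HomLeibniz brL alL)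
  (L_perfect : perfect brL) (alL_inj : injective alL)
  (f_ext : central_extension brK alK brL alL f) (K_C : condC brK alK).

Let brK_ml : multilinear brK. Proof. by case: HK. Qed.
Let alK_lin : is_linear_map alK. Proof. by case: HK. Qed.
Let alK_br x : alK (brK x) = brK [ffun j => alK (x j)]. Proof. by case: HK. Qed.
Let brK_leibniz := let: And4 _ _ _ h := HK in h.
Let alL_lin : is_linear_map alL. Proof. by case: HL. Qed.
Let alL_br x : alL (brL x) = brL [ffun j => alL (x j)]. Proof. by case: HL. Qed.
Let f_lin : is_linear_map f. Proof. by case: f_ext => -[]. Qed.
Let f_br x : f (brK x) = brL [ffun j => f (x j)]. Proof. by case: f_ext => -[]. Qed.
Let f_al v : f (alK v) = alL (f v). Proof. by case: f_ext => -[]. Qed.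
Let f_surj l : exists k, f k = l. Proof. by case: f_ext => _ h _; apply: h. Qed.
Lemma ker_bracket0 w (z : {ffun 'I_n'.+2 -> K}) i :
  f w = 0 -> brK (upd z i w) = 0.
Proof. by case: f_ext => _ _ w_centre /w_centre[_]; apply. Qed.

Lemma linear_vanish_perfect (W : lmodType F) (Phi : K -> W) :
  is_linear_map Phi -> (forall q, Phi (brK q) = 0) ->
  (forall w, f w = 0 -> Phi w = 0) -> forall u, Phi u = 0.
Proof.
move=> Phi_lin Phi_br Phi_ker u; have [s] := L_perfect (f u).
elim: s u => [|p s IH] u; first by rewrite big_nil; apply: Phi_ker.
rewrite big_cons => fuE.
have [q qE] : exists q : {ffun 'I_n'.+2 -> K}, [ffun j => f (q j)] = p.2.
  have [g gE] := fin_all_exists (fun j => f_surj (p.2 j)).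
  by exists [ffun j => g j]; apply/ffunP => j; rewrite !ffunE gE.
rewrite -(subrK (p.1 *: brK q) u) (linD Phi_lin) (linZ Phi_lin) Phi_br.
rewrite scaler0 addr0; apply: IH.
by rewrite (linB f_lin) (linZ f_lin) f_br fuE qE addrC addKr.
Qed.

Section CentralLift.
Variables (l : L) (k : K).
Hypotheses (l_centre : centre_in brL (image_of alL) (alL l)) (k_lift : f k = l).

Lemma f_bracket_slot_lift (t : {ffun 'I_n'.+2 -> K}) i :
  t i = k -> f (brK t) = 0.
Proof.
move=> ti; apply: alL_inj; rewrite (lin0 alL_lin) f_br alL_br.
set T := [ffun j => alL _]; rewrite -(upd_id T i).
have -> : T i = alL l by rewrite /T !ffunE ti k_lift.
by apply: l_centre.2 => j; rewrite /T ffunE; eexists.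
Qed.

Lemma bracket_slot_lift_tail (z : {ffun 'I_n'.+2 -> K}) i' :
  z (lift ord0 i') = k -> brK [ffun j => alK (z j)] = 0.
Proof.
move=> zi; rewrite (ffun_consf z) consf_map.
set Y := [ffun j => z (lift ord0 j)].
pose Phi u := brK (consf (alK u) [ffun j => alK (Y j)]).
apply: (@linear_vanish_perfect _ Phi) => [a u v|q|w fw].
- by rewrite /Phi alK_lin (consf_updE _ 0) brK_ml -!(consf_updE _ 0).
- rewrite /Phi alK_br brK_leibniz; apply: big1 => m _.
  have inner0 : f (brK (consf (alK (q m)) Y)) = 0.
    by apply: (@f_bracket_slot_lift _ (lift ord0 i')); rewrite consf_lift ffunE.
  rewrite -(ker_bracket0 [ffun j => alK (alK (q j))] m inner0).
  by congr (brK _); apply/ffunP => j; rewrite !ffunE; case: eqP.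
- rewrite /Phi (consf_updE _ 0) ker_bracket0 // f_al fw; exact: lin0.
Qed.

Lemma bracket_slot_lift (z : {ffun 'I_n'.+2 -> K}) i :
  z i = k -> brK [ffun j => alK (z j)] = 0.
Proof.
case: (unliftP ord0 i) => [i'|] -> zi; first exact: bracket_slot_lift_tail zi.
rewrite (bracket_swap01 brK_ml alK_lin K_C).
have -> : [ffun j => alK (z (swap01 j))] = [ffun j => alK ([ffun j => z (swap01 j)] j)].
  by apply/ffunP => j; rewrite !ffunE.
by rewrite (@bracket_slot_lift_tail _ ord0) ?oppr0 // ffunE.
Qed.

End CentralLift.

Lemma centre_image_lift (y : L) : centre_in brL (image_of alL) y ->
  exists x, centre_in brK (image_of alK) x /\ f x = y.
Proof.
move=> y_centre; have [l yE] := y_centre.1; have [k k_lift] := f_surj l.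
exists (alK k); split; last by rewrite f_al k_lift yE.
split=> [|i z z_im]; first by exists k.
have [kz kzE] := fin_all_exists z_im.
have -> : upd z i (alK k) = [ffun j => alK ([ffun j => if j == i then k else kz j] j)].
  by apply/ffunP => j; rewrite !ffunE; case: eqP.
have l_centre : centre_in brL (image_of alL) (alL l) by rewrite -yE.
by apply: (bracket_slot_lift l_centre k_lift (i := i)); rewrite ffunE eqxx.
Qed.

End CentralExtension.

Theorem proposition5p4 (F : fieldType) (n : nat) (hn : (2 <= n)%N)
    (K L : lmodType F)
    (brK : {ffun 'I_n -> K} -> K) (alK : K -> K)
    (brL : {ffun 'I_n -> L} -> L) (alL : L -> L) (f : K -> L) :
  HomLeibniz brK alK -> HomLeibniz brL alL ->
  perfect brL -> injective alL ->
  central_extension brK alK brL alL f ->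
  condC brK alK ->
  forall y : L,
    (exists x : K, centre_in brK (image_of alK) x /\ f x = y)
    <-> centre_in brL (image_of alL) y.
Proof.
case: n hn brK brL => [|[|n']] // _ brK brL HK HL L_perfect alL_inj f_ext K_C y.
split; last exact: centre_image_lift.
move=> [x [x_centre <-]]; case: f_ext => f_hom f_surj _.
exact: (hom_centre_image f_hom).
Qed.
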